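(* Let $k$ be the number of frequent items and let $M$ be the maximum level of the tree, where $M$ does not exceed the maximal length of a preprocessed transaction. Let the cut-down size parameter $\xi$ be a fixed constant. Then the computational complexity of constructing a noisy FP-tree by the procedure ConstructNoisyTree described below is $O(k^3)$.
   Context: Setting. There is a domain $\mathcal{X}=\{x_1,\dots,x_d\}$ of items; each user holds a transaction $t\subseteq\mathcal{X}$. A set $S'$ of $k$ ''frequent items'' is given, ordered $x_1\succ x_2\succ\cdots\succ x_k$ (descending estimated frequency), together with estimated item frequencies. A positive integer $M$ (maximum tree level), a privacy parameter $\epsilon>0$ and a constant $\xi>0$ are given. Procedure ConstructNoisyTree$(G_3,S',M,\epsilon)$ on a group $G_3$ of users: (1) Split $G_3$ randomly into $M$ groups $g_1,\dots,g_M$ of size $n_g=\lfloor |G_3|/M\rfloor$. (2) Preprocessing: each user deletes items not in $S'$ and sorts the remaining items in the order $\succ$; since every preprocessed transaction has at most $k$ items, one has $M\le k$. (3) The tree is initialized with a root (level 0) of count $n_g$; each node $v$ stores an item $v.item$ and a count $v.count$, and corresponds to the prefix $\bar p_v$ formed by the items on the path from the root to $v$. (4) For $l=1,\dots,M$: for each node $v$ at level $l-1$ with positive count, add a child $v_c$ (count $0$) for every item $x\in S'$ ranked after $v.item$ (every $x\in S'$ if $v$ is the root); the prefixes of these children form the candidate set $C_l$. If $|C_l|>\xi k$, keep only the $\xi k$ candidates with the highest temporal guessing frequency $\mathbb{T}(\bar p_v)=\tilde f(\bar p_{\mathrm{parent}(v)})\cdot \bar f(v)$, where, if $v.item=x_{i+j}$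 and the parent's item is $x_i$, $\bar f(v)=\tilde f(x_{i+j})\prod_{t=1}^{j-1}(1-\tilde f(x_{i+t}))$ with $\tilde f$ the (normalized) estimated item frequencies. Each user of $g_l$ then reports, via the OLH frequency oracle with budget $\epsilon$ over the domain $C_l\cup\{\dagger\}$, the prefix formed by her first $l$ preprocessed items (or the dummy value $\dagger$ if it is not in $C_l$); the analyst computes the estimated count of each node at level $l$ and replaces negative counts by $0$. The complexity is measured as a function of $k$ (with $\xi$ constant), counting the candidate nodes generated and processed over all levels of the tree. *)

From mathcomp Require Import all_boot all_order all_algebra.
Set Implicit Arguments. Unset Strict Implicit. Unset Printing Implicit Defensive.
Import Order.TTheory GRing.Theory Num.Theory.

(* Frequent items of S' are identified with their ranks 0..k-1 in the order
   x_1 > x_2 > ... > x_k (rank 0 = most frequent).  A tree node is identified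
   with its prefix (the items on the path from the root), i.e. a sequence of
   ranks; the root is the empty prefix. *)

Definition ranked_after (k : nat) (p : seq 'I_k) (x : 'I_k) : bool :=
  if p is y :: p' then (nat_of_ord (last y p') < nat_of_ord x)%N else true.

Definition children (k : nat) (p : seq 'I_k) : seq (seq 'I_k) :=
  [seq rcons p x | x <- enum 'I_k & ranked_after p x].

(* candidate set C_l generated from the kept nodes of level l-1,
   [pos v] meaning that node v has positive (estimated) count *)
Definition candidates (k : nat) (pos : seq 'I_k -> bool)
    (prev : seq (seq 'I_k)) : seq (seq 'I_k) :=
  flatten [seq children p | p <- prev & pos p].

Definition cut_size (R : archiRealFieldType) (xi : R) (k : nat) : nat :=
  Num.truncn (xi * k%:R).

(* [T] is a valid run of the level loop of ConstructNoisyTree for levels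
   1..M: T l is the list of nodes (prefixes) of level l kept in the tree.
   [pos] gives the positivity of the (noisy, clamped) estimated counts,
   which is arbitrary; [score] is the temporal guessing frequency used to
   rank candidates when the cut-down applies. *)
Definition noisy_tree_run (R : archiRealFieldType) (xi : R) (k M : nat)
    (pos : seq 'I_k -> bool) (score : seq 'I_k -> R)
    (T : nat -> seq (seq 'I_k)) : Prop :=
  T 0%N = [:: [::]] /\
  forall l, (1 <= l <= M)%N ->
    let C := candidates pos (T l.-1) in
    if (size C <= cut_size xi k)%N then T l = C
    else [/\ subseq (T l) C, size (T l) = cut_size xi k &
            forall v w, v \in T l -> w \in C -> w \notin T l ->
              (score w <= score v)%R].

(* cost: number of candidate nodes generated and processed over all levels *)
Definition run_cost (k M : nat) (pos : seq 'I_k -> bool)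
    (T : nat -> seq (seq 'I_k)) : nat :=
  (\sum_(1 <= l < M.+1) size (candidates pos (T l.-1)))%N.

(* Every kept node has at most k children, and after the cut-down every
   level keeps at most [xi k] nodes (the root level keeps one).  So each of
   the M <= k levels processes at most k (xi k + 1) candidates, which gives
   a total of at most (1 + xi) k^3. *)
From mathcomp Require Import all_boot all_order all_algebra.
From mathcomp Require Import lra.
Set Implicit Arguments. Unset Strict Implicit. Unset Printing Implicit Defensive.
Import Order.TTheory GRing.Theory Num.Theory.

Lemma size_children k (p : seq 'I_k) : (size (children p) <= k)%N.
Proof.
rewrite /children size_map size_filter -[k in (_ <= k)%N]size_enum_ord.
exact: count_size.
Qed.

Lemma size_candidates k (pos : seq 'I_k -> bool) (prev : seq (seq 'I_k)) :
  (size (candidates pos prev) <= k * size prev)%N.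
Proof.
rewrite /candidates; elim: prev => [|p prev IH] //=.
case: (pos p) => /=.
  by rewrite size_cat mulnS leq_add ?size_children.
by rewrite mulnS (leq_trans IH) ?leq_addl.
Qed.

Section NoisyTreeRun.
Variables (R : archiRealFieldType) (xi : R) (k M : nat).
Variables (pos : seq 'I_k -> bool) (score : seq 'I_k -> R).
Variable T : nat -> seq (seq 'I_k).
Hypothesis run : noisy_tree_run xi M pos score T.

Lemma noisy_tree_run_size l : (l <= M)%N -> (size (T l) <= (cut_size xi k).+1)%N.
Proof.
case: run => T0 step; case: l => [|l] le_lM; first by rewrite T0.
have := step l.+1; rewrite le_lM /= => /(_ isT).
by case: ifP => [le_Cc -> | _ [_ -> _]]; [exact: leqW | exact: leqnSn].
Qed.

Lemma run_cost_le : (run_cost M pos T <= M * (k * (cut_size xi k).+1))%N.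
Proof.
have -> : (M * (k * (cut_size xi k).+1) = \sum_(1 <= l < M.+1) k * (cut_size xi k).+1)%N.
  by rewrite sum_nat_const_nat subn1.
rewrite /run_cost !big_nat.
apply: leq_sum => l /andP[_ le_lM].
rewrite (leq_trans (size_candidates pos (T l.-1))) // leq_mul2l.
by rewrite noisy_tree_run_size ?orbT // (leq_trans (leq_pred l)).
Qed.

End NoisyTreeRun.

Local Open Scope ring_scope.

Lemma cut_size_le (R : archiRealFieldType) (xi : R) k :
  0 <= xi -> (cut_size xi k)%:R <= xi * k%:R.
Proof. by move=> xi_ge0; rewrite truncn_le mulr_ge0. Qed.

Lemma levels_cost_le_cube (R : realFieldType) (xi : R) (k M c : nat) :
  (M <= k)%N -> c%:R <= xi * k%:R ->
  (M * (k * c.+1))%:R <= (1 + xi) * k%:R ^+ 3.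
Proof.
move=> le_Mk le_c; have [-> | k_gt0] := posnP k.
  by rewrite mul0n muln0 exprS mul0r mulr0.
have k_ge1 : 1 <= k%:R :> R by rewrite ler1n.
have le_M : M%:R <= k%:R :> R by rewrite ler_nat.
rewrite !natrM -addn1 natrD exprS expr2.
have le_kcM : M%:R * (k%:R * (c%:R + 1)) <= k%:R * (k%:R * (c%:R + 1)) :> R.
  by rewrite ler_wpM2r // mulr_ge0 // addr_ge0.
apply: le_trans le_kcM _.
have le_c1 : c%:R + 1 <= (1 + xi) * k%:R :> R by rewrite mulrDl mul1r; lra.
rewrite mulrA mulrCA mulrA [X in _ <= X]mulrC ler_wpM2l ?mulr_ge0 //.
by rewrite mulrC.
Qed.

Theorem theorem4p1 (R : archiRealFieldType) (xi : R) (hxi : 0 < xi) :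
  exists C : R, forall (k M : nat), (M <= k)%N ->
    forall (pos : seq 'I_k -> bool) (score : seq 'I_k -> R)
           (T : nat -> seq (seq 'I_k)),
      noisy_tree_run xi M pos score T ->
      (run_cost M pos T)%:R <= C * k%:R ^+ 3.
Proof.
exists (1 + xi) => k M le_Mk pos score T run.
apply: le_trans (levels_cost_le_cube le_Mk (cut_size_le k (ltW hxi))).
by rewrite ler_nat (run_cost_le run).
Qed.
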